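(* Let $q\ge5$ be an integer coprime to $6$ and let $b$ be the inverse of $2$ modulo $q$. For any prime $p\mid q$, $$\sum_{d\ (\mathrm{mod}\ p)}\left(\frac{d(d+1)(d+2)(d+3)}{p}\right)=-(\Delta_p+1),$$ where $\Delta_p:=p+1-\#E_{3b^2}(\mathbb{F}_p)$.
   Context: $\left(\frac{\cdot}{p}\right)$ is the Legendre symbol. For $\lambda\in\mathbb{F}_p$, $E_\lambda/\mathbb{F}_p$ is the curve with Legendre model $y^2=x(x-1)(x-\lambda)$, and $\#E_\lambda(\mathbb{F}_p)$ counts its $\mathbb{F}_p$-rational points including the point at infinity. *)

From mathcomp Require Import all_boot all_algebra.
Set Implicit Arguments. Unset Strict Implicit. Unset Printing Implicit Defensive.
Import GRing.Theory Num.Theory.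
Local Open Scope ring_scope.

Definition legendre (p : nat) (a : int) : int :=
  if (p%:Z %| a)%Z then 0
  else if [exists x : 'I_p, (p%:Z %| (x%:Z) ^+ 2 - a)%Z] then 1 else -1.

(* #E_lam(F_p) for the Legendre model y^2 = x(x-1)(x-lam), including the
   point at infinity. *)
Definition ellpts (p : nat) (lam : 'F_p) : nat :=
  #|[set xy : 'F_p * 'F_p | xy.2 ^+ 2 == xy.1 * (xy.1 - 1) * (xy.1 - lam)]|.+1.

(* Substituting x = 1/u turns x(x+1)(x+2)(x+3) into u^-4 (1+u)(1+2u)(1+3u), so
   the quartic character sum equals the cubic one minus the contribution of
   x = 0.  The affine change u = -1 + 2x/3 maps the cubic (1+u)(1+2u)(1+3u) to
   (4/3)^2 x(x-1)(x-3/4), and 3/4 = 3b^2 in F_p.  Finally, counting square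
   roots gives #E_lam(F_p) = p + 1 + sum_x (x(x-1)(x-lam) / p). *)

From mathcomp Require Import all_boot all_algebra.
From mathcomp Require Import ring.
Set Implicit Arguments. Unset Strict Implicit. Unset Printing Implicit Defensive.
Import GRing.Theory Num.Theory.
Local Open Scope ring_scope.

Section QuadraticCharacter.

Variable F : finFieldType.

Definition qchar (a : F) : int :=
  if a == 0 then 0 else if [exists y : F, y ^+ 2 == a] then 1 else -1.

Lemma qchar0 : qchar 0 = 0.
Proof. by rewrite /qchar eqxx. Qed.

Lemma qchar1 : qchar 1 = 1.
Proof.
rewrite /qchar oner_eq0; case: existsP => // - [].
by exists 1; rewrite expr1n.
Qed.

Lemma qcharM_sqr (a s : F) : s != 0 -> qchar (a * s ^+ 2) = qchar a.
Proof.
move=> s0; rewrite /qchar mulf_eq0 expf_eq0 (negbTE s0) andbF orbF.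
case: ifP => // _; congr (if _ then _ else _).
apply/existsP/existsP => -[y /eqP Hy].
  by exists (y / s); rewrite expr_div_n Hy mulfK ?expf_neq0.
by exists (y * s); rewrite exprMn Hy.
Qed.

Lemma card_sqrt (a : F) : (2%:R : F) != 0 ->
  #|[set y : F | y ^+ 2 == a]|%:Z = 1 + qchar a.
Proof.
move=> two0; rewrite /qchar; have [->|a0] := eqVneq a 0.
  have -> : [set y : F | y ^+ 2 == 0] = [set 0].
    by apply/setP => y; rewrite !inE sqrf_eq0.
  by rewrite cards1.
case: existsP => [[r /eqP ra]|no_root].
  have -> : [set y : F | y ^+ 2 == a] = [set r; -r].
    by apply/setP => y; rewrite !inE -ra eqf_sqr.
  have r0 : r != 0 by apply: contra_neq a0 => r0; rewrite -ra r0 expr0n.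
  rewrite cards2 -addr_eq0 -mulr2n -mulr_natl mulf_eq0.
  by rewrite (negbTE two0) (negbTE r0).
have -> : [set y : F | y ^+ 2 == a] = set0.
  by apply/setP => y; rewrite !inE; apply/negP => ya; apply: no_root; exists y.
by rewrite cards0.
Qed.

Lemma card_sqr_graph (f : F -> F) : (2%:R : F) != 0 ->
  #|[set xy : F * F | xy.2 ^+ 2 == f xy.1]|%:Z = #|F|%:Z + \sum_x qchar (f x).
Proof.
move=> two0.
have -> : #|[set xy : F * F | xy.2 ^+ 2 == f xy.1]|
          = (\sum_x #|[set y : F | y ^+ 2 == f x]|)%N.
  rewrite -sum1_card big_mkcond.
  transitivity (\sum_x \sum_y
    (if (x, y) \in [set xy : F * F | xy.2 ^+ 2 == f xy.1] then 1 else 0))%N.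
    by rewrite pair_bigA; apply: eq_bigr => -[x y] _.
  apply: eq_bigr => x _; rewrite -sum1_card [RHS]big_mkcond.
  by apply: eq_bigr => y _; rewrite !inE.
rewrite (big_morph Posz PoszD (erefl _)).
rewrite (eq_bigr (fun x => 1 + qchar (f x))) => [|x _]; last exact: card_sqrt.
by rewrite big_split /= sumr_const cardE natz.
Qed.

Lemma sum_qchar_inv (f g : F -> F) :
    (forall u, u != 0 -> f u^-1 = g u * (u^-1 ^+ 2) ^+ 2) ->
  \sum_x qchar (f x) = \sum_u qchar (g u) + qchar (f 0) - qchar (g 0).
Proof.
move=> fg; rewrite (reindex_inj invr_inj) (bigD1 0) //= [in RHS](bigD1 0) //=.
rewrite invr0 (eq_bigr (qchar \o g)) /= => [|u u0]; first by ring.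
by rewrite fg // qcharM_sqr // expf_neq0 // invr_eq0.
Qed.

Lemma sum_qchar_affine (f : F -> F) (c a : F) : a != 0 ->
  \sum_x qchar (f (c + a * x)) = \sum_x qchar (f x).
Proof.
move=> a0; have affine_inj : injective (fun x : F => c + a * x).
  by move=> x y /addrI; apply: mulfI.
by rewrite [RHS](reindex_inj affine_inj).
Qed.

Lemma sum_qchar_quartic : (2%:R : F) != 0 -> (3%:R : F) != 0 ->
  \sum_x qchar (x * (x + 1) * (x + 2%:R) * (x + 3%:R))
  = \sum_x qchar (x * (x - 1) * (x - 3%:R / 4%:R)) - 1.
Proof.
move=> two0 three0; have four0 : (4%:R : F) != 0.
  by rewrite (natrM _ 2 2) mulf_neq0.
pose C (u : F) := (1 + u) * (1 + 2%:R * u) * (1 + 3%:R * u).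
rewrite (sum_qchar_inv (g := C)) => [|u u0]; last by rewrite /C; field.
rewrite /C !mul0r !mulr0 !addr0 !mulr1 qchar1.
rewrite -(sum_qchar_affine _ (-1) (a := 2%:R / 3%:R)) ?mulf_neq0 ?invr_eq0 //.
rewrite qchar0 addr0; congr (_ - 1); apply: eq_bigr => x _.
rewrite -[RHS](qcharM_sqr _ (s := 4%:R / 3%:R)) ?mulf_neq0 ?invr_eq0 //.
by congr qchar; field; rewrite three0.
Qed.

End QuadraticCharacter.

Lemma Fp_natr_eq (p m n : nat) : prime p ->
  ((m%:R : 'F_p) == n%:R) = (m == n %[mod p])%N.
Proof. by move=> pr; rewrite -val_eqE /= !val_Fp_nat. Qed.

Lemma legendre_qchar (p n : nat) : prime p ->
  legendre p n%:Z = qchar (n%:R : 'F_p).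
Proof.
move=> pr; rewrite /legendre /qchar dvdzE /= (dvdn_pcharf (pchar_Fp pr)).
case: ifP => // _; congr (if _ then _ else _).
have eq_mod_p (x : nat) : (p%:Z %| x%:Z ^+ 2 - n%:Z)%Z = ((x%:R : 'F_p) ^+ 2 == n%:R).
  by rewrite -eqz_mod_dvd -natz -natrX natz !modz_nat eqz_nat -natrX Fp_natr_eq.
apply/existsP/existsP => [[x]|[y]]; first by rewrite eq_mod_p; exists x%:R.
have y_lt_p : (val y < p)%N by case: y => y y_lt /=; rewrite -(Fp_cast pr).
by exists (Ordinal y_lt_p); rewrite eq_mod_p /= natr_Zp.
Qed.

Lemma sum_ord_Fp (p : nat) (G : 'F_p -> int) : prime p ->
  \sum_(d < p) G d%:R = \sum_(x : 'F_p) G x.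
Proof.
move=> pr; rewrite [RHS](eq_bigr (fun x : 'F_p => G (val x)%:R)) => [|x _].
  by rewrite -!(big_mkord xpredT (fun d => G d%:R)) (Fp_cast pr).
by rewrite natr_Zp.
Qed.

Lemma Fp_natr_neq0 (p k : nat) : prime p -> coprime p k -> (k%:R : 'F_p) != 0.
Proof.
by move=> pr cpk; rewrite -(dvdn_pcharf (pchar_Fp pr)) -prime_coprime.
Qed.

Lemma Fp_half (q b p : nat) : prime p -> (p %| q)%N ->
  (2 * b = 1 %[mod q])%N -> (2%:R * b%:R : 'F_p) = 1.
Proof.
move=> pr pq hb; rewrite -natrM; apply/eqP.
by rewrite -[1]/(1%:R) Fp_natr_eq // -(modn_dvdm _ pq) hb modn_dvdm.
Qed.

Theorem lemma6p5 (q b p : nat) :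
  (5 <= q)%N -> coprime q 6 -> (2 * b = 1 %[mod q])%N ->
  prime p -> (p %| q)%N ->
  \sum_(d < p) legendre p (d * (d + 1) * (d + 2) * (d + 3))%N%:Z
  = - ((p%:Z + 1 - (ellpts ((3 * b ^ 2)%N%:R : 'F_p))%:Z) + 1).
Proof.
move=> _ cop hb pr pq.
have cp6 : coprime p 6 := coprime_dvdl pq cop.
have two0 : (2%:R : 'F_p) != 0 by apply: Fp_natr_neq0 pr (coprime_dvdr _ cp6).
have three0 : (3%:R : 'F_p) != 0 by apply: Fp_natr_neq0 pr (coprime_dvdr _ cp6).
have lam_eq : ((3 * b ^ 2)%N%:R : 'F_p) = 3%:R / 4%:R.
  have b_half : (b%:R : 'F_p) = 2%:R^-1.
    by apply: (mulfI two0); rewrite (Fp_half pr pq hb) mulfV.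
  rewrite natrM natrX b_half; field.
  by rewrite two0 (natrM _ 2 2) mulf_neq0.
have legendre_sum : \sum_(d < p) legendre p (d * (d + 1) * (d + 2) * (d + 3))%N%:Z
    = \sum_(x : 'F_p) qchar (x * (x + 1) * (x + 2%:R) * (x + 3%:R)).
  rewrite -sum_ord_Fp //; apply: eq_bigr => d _.
  by rewrite legendre_qchar // !natrM !natrD.
rewrite legendre_sum sum_qchar_quartic // /ellpts lam_eq intS.
rewrite (card_sqr_graph (fun x => x * (x - 1) * (x - 3%:R / 4%:R))) //.
by rewrite card_Fp //; ring.
Qed.
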